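(* In base $B=3$, for every integer $\eta>2$, $$\gamma_3(\eta)=4\left(\frac{3^{-1/2}}{2}\,3\uparrow\uparrow(\eta-2)\right)^{7/2}-1,$$ i.e. with $E_1=\frac{3^{-1/2}}{2}\,3^{7/2}$ and $E_{m+1}=\frac{3^{-1/2}}{2}\,3^{E_m}$ for $m\ge1$, one has $\gamma_3(\eta)=4E_{\eta-2}-1$.
   Context: Every integer $x>0$ is written uniquely in base $3$ as $x=\sum_{i} x_i 3^i$ with digits $x_i\in\{0,1,2\}$. Define $\mathcal{H}_3(x)=\sum_{i} x_i^2$, $\mathcal{H}_3^0(x)=x$, $\mathcal{H}_3^n=\mathcal{H}_3\circ\mathcal{H}_3^{n-1}$. A positive integer $x$ is happy if $\mathcal{H}_3^n(x)=1$ for some $n\in\mathbb{N}$; its height is $\eta_3(x)=\min\{\alpha\in\mathbb{N}:\mathcal{H}_3^\alpha(x)=1\}$. For $n\in\mathbb{N}$, $\gamma_3(n)$ denotes the smallest happy number $x\ge1$ with $\eta_3(x)=n$. Adapted up-arrow notation: for reals $k,x,y,z$ and integer $n\ge1$, $k(xy\uparrow\uparrow n)^z=k\,E_n$ where $E_1=x\,y^{z}$ and $E_{m+1}=x\,y^{E_m}$ (the factor ''$xy$'' is repeated $n$ times in the tower $k\,x y^{x y^{\cdot^{\cdot^{x y^{z}}}}}$); here $k=4$, $x=\frac{3^{-1/2}}{2}$, $y=3$, $z=\frac72$. *)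

From Stdlib Require Import Reals Arith.
Open Scope R_scope.

(* Sum of squares of base-3 digits, computed with fuel x (enough since each
   step divides by 3; the digit 0 of the exhausted part contributes 0). *)
Fixpoint H3_fuel (fuel x : nat) : nat :=
  match fuel with
  | O => O
  | S f => ((x mod 3) * (x mod 3) + H3_fuel f (x / 3))%nat
  end.

Definition H3 (x : nat) : nat := H3_fuel x x.

Definition H3iter (n x : nat) : nat := Nat.iter n H3 x.

Definition happy3 (x : nat) : Prop := (0 < x)%nat /\ exists n : nat, H3iter n x = 1%nat.

Definition height3 (x a : nat) : Prop :=
  H3iter a x = 1%nat /\ forall b : nat, (b < a)%nat -> H3iter b x <> 1%nat.

Definition is_gamma3 (n x : nat) : Prop :=
  (1 <= x)%nat /\ happy3 x /\ height3 x n /\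
  forall y : nat, (1 <= y)%nat -> happy3 y -> height3 y n -> (x <= y)%nat.

(* Adapted up-arrow tower: E_0 = z, E_{m+1} = x * y^(E_m); so E_1 = x y^z,
   and k (x y ^^ n)^z = k * uptower x y z n for n >= 1. *)
Fixpoint uptower (x y z : R) (n : nat) : R :=
  match n with
  | O => z
  | S m => x * Rpower y (uptower x y z m)
  end.

(* Write twos k = 2·3^k − 1, the number whose base-3 expansion is k twos.
   It is the least number with H₃ ≥ 4k + 1: H₃(twos k) = 4k + 1, while every
   x < twos k has at most k digits, or k + 1 digits beginning with a 1, hence
   H₃(x) ≤ 4k.  Consequently, if γ₃(n) = 4k + 1 (n ≥ 1) then
   γ₃(n + 1) = twos k: heights drop by exactly one under H₃, so any y of
   height n + 1 has H₃(y) ≥ γ₃(n) = 4k + 1, forcing y ≥ twos k.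

   Starting from γ₃(2) = 13 = 4·3 + 1 (checked by computation), induction
   gives γ₃(m + 3) = twos (K m) with K 0 = 3 and K (m+1) = (3^(K m) − 1)/2;
   this is well defined because 3^K is odd, and then 4·(K (m+1)) + 1 =
   twos (K m), which is what feeds the induction.  On the real side, with
   a = 3^(−1/2)/2 one has a·3^((2k+1)/2) = 3^k/2, so the tower satisfies
   E_(m+1) = 3^(K m)/2, and γ₃(m + 3) = 2·3^(K m) − 1 = 4·E_(m+1) − 1. *)

From Stdlib Require Import Reals Arith Lia Lra.
Open Scope R_scope.

Lemma H3_fuel_zero : forall f, H3_fuel f 0 = 0%nat.
Proof. induction f; simpl; auto. Qed.

Lemma H3_fuel_enough : forall f g x,
  (x <= f)%nat -> (x <= g)%nat -> H3_fuel f x = H3_fuel g x.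
Proof.
  induction f as [|f IH]; intros g x Hf Hg.
  - replace x with 0%nat by lia. now rewrite !H3_fuel_zero.
  - destruct g as [|g].
    + replace x with 0%nat by lia. now rewrite !H3_fuel_zero.
    + cbn [H3_fuel]. f_equal. apply IH;
        pose proof (Nat.div_mod x 3 ltac:(lia)); lia.
Qed.

Lemma H3_digits : forall x, H3 x = (x mod 3 * (x mod 3) + H3 (x / 3))%nat.
Proof.
  intros [|x]; [reflexivity|].
  unfold H3 at 1. cbn [H3_fuel]. f_equal. unfold H3.
  apply H3_fuel_enough; [|lia].
  pose proof (Nat.div_lt (S x) 3). lia.
Qed.

(* twos k = 2·3^k − 1 is written with k twos in base 3. *)
Definition twos (k : nat) : nat := (2 * 3 ^ k - 1)%nat.

Lemma twos_succ : forall k, twos (S k) = (2 + twos k * 3)%nat.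
Proof.
  intros k. unfold twos. rewrite Nat.pow_succ_r'.
  pose proof (Nat.pow_nonzero 3 k). lia.
Qed.

Lemma H3_twos : forall k, H3 (twos k) = (4 * k + 1)%nat.
Proof.
  induction k as [|k IH]; [reflexivity|].
  rewrite H3_digits, twos_succ, Nat.Div0.mod_add, Nat.div_add by lia.
  change (2 mod 3)%nat with 2%nat. change (2 / 3)%nat with 0%nat.
  rewrite Nat.add_0_l, IH. lia.
Qed.

Lemma H3_below_twos : forall k x, (x < twos k)%nat -> (H3 x <= 4 * k)%nat.
Proof.
  induction k as [|k IH]; intros x Hx.
  - unfold twos in Hx. simpl in Hx. now replace x with 0%nat by lia.
  - rewrite H3_digits.
    rewrite twos_succ in Hx.
    pose proof (Nat.div_mod x 3 ltac:(lia)) as Hdiv.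
    pose proof (Nat.mod_upper_bound x 3 ltac:(lia)) as Hdigit.
    destruct (Nat.lt_ge_cases (x / 3) (twos k)) as [Hq|Hq].
    + (* the leading part is below twos k; the last digit adds at most 4 *)
      pose proof (IH _ Hq). assert (x mod 3 * (x mod 3) <= 4)%nat by nia. lia.
    + (* the leading part is twos k itself, so the last digit is 0 or 1 *)
      assert (Hlead : (x / 3 = twos k)%nat) by lia.
      assert (x mod 3 <= 1)%nat by lia.
      rewrite Hlead, H3_twos. nia.
Qed.

Lemma H3iter_succ : forall n x, H3iter (S n) x = H3iter n (H3 x).
Proof.
  unfold H3iter. induction n; intros x; simpl; auto.
  now rewrite <- IHn.
Qed.

Lemma H3iter_zero : forall n, H3iter n 0 = 0%nat.
Proof. unfold H3iter; induction n; simpl; auto. now rewrite IHn. Qed.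

Lemma height3_happy : forall x n, height3 x n -> happy3 x.
Proof.
  intros x n [Hn _]. split; [|now exists n].
  destruct x; [|lia]. rewrite H3iter_zero in Hn. discriminate.
Qed.

Lemma height3_H3 : forall y n, height3 y (S n) -> height3 (H3 y) n.
Proof.
  intros y n [Hy Hmin]. split.
  - now rewrite <- H3iter_succ.
  - intros b Hb. rewrite <- H3iter_succ. apply Hmin. lia.
Qed.

Lemma height3_from_H3 : forall x n, x <> 1%nat -> height3 (H3 x) n -> height3 x (S n).
Proof.
  intros x n Hx [Hh Hmin]. split.
  - now rewrite H3iter_succ.
  - intros [|b] Hb; [exact Hx|]. rewrite H3iter_succ. apply Hmin. lia.
Qed.

Lemma is_gamma3_succ : forall n k,
  (1 <= n)%nat -> is_gamma3 n (4 * k + 1) -> is_gamma3 (S n) (twos k).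
Proof.
  intros n k Hn [_ [_ [Hheight Hleast]]].
  assert (Hk : (1 <= k)%nat).
  { destruct k; [|lia]. exfalso. apply (proj2 Hheight 0%nat); [lia|reflexivity]. }
  assert (Hht : height3 (twos k) (S n)).
  { apply height3_from_H3; [|now rewrite H3_twos].
    unfold twos. pose proof (Nat.pow_le_mono_r 3 1 k). simpl in *. lia. }
  pose proof (height3_happy _ _ Hht) as Hhappy.
  split; [exact (proj1 Hhappy)|]. split; [exact Hhappy|]. split; [exact Hht|].
  intros y _ _ Hy.
  pose proof (height3_H3 _ _ Hy) as Hy'.
  pose proof (height3_happy _ _ Hy') as Hhappy'.
  assert (Hge : (4 * k + 1 <= H3 y)%nat) by exact (Hleast _ (proj1 Hhappy') Hhappy' Hy').
  destruct (Nat.lt_ge_cases y (twos k)) as [Hlt|Hle]; [|exact Hle].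
  pose proof (H3_below_twos k y Hlt). lia.
Qed.

Lemma no_height2_below_13 : forall y, (y < 13)%nat -> ~ height3 y 2.
Proof.
  intros y Hy [H2 Hb].
  pose proof (Hb 0%nat ltac:(lia)). pose proof (Hb 1%nat ltac:(lia)).
  do 13 (destruct y as [|y]; [vm_compute in *; lia|]). lia.
Qed.

Lemma is_gamma3_2 : is_gamma3 2 13.
Proof.
  assert (Hht : height3 13 2).
  { split; [reflexivity|]. intros [|[|b]] Hb; vm_compute; lia. }
  split; [lia|]. split; [apply (height3_happy _ _ Hht)|]. split; [exact Hht|].
  intros y _ _ Hy. destruct (Nat.lt_ge_cases y 13) as [Hlt|Hle]; [|exact Hle].
  exfalso. exact (no_height2_below_13 y Hlt Hy).
Qed.

(* K m: the exponent with γ₃(m + 3) = twos (K m). *)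
Fixpoint gamma_exp (m : nat) : nat :=
  match m with
  | O => 3
  | S m' => Nat.div2 (3 ^ gamma_exp m')
  end.

Lemma pow3_odd : forall K, (3 ^ K = 2 * Nat.div2 (3 ^ K) + 1)%nat.
Proof.
  intros K. rewrite (Nat.div2_odd (3 ^ K)) at 1.
  destruct K as [|K]; [reflexivity|]. now rewrite Nat.odd_pow.
Qed.

Lemma is_gamma3_gamma_exp : forall m, is_gamma3 (m + 3) (twos (gamma_exp m)).
Proof.
  induction m as [|m IH].
  - exact (is_gamma3_succ 2 3 ltac:(lia) is_gamma3_2).
  - apply (is_gamma3_succ (m + 3)); [lia|].
    replace (4 * gamma_exp (S m) + 1)%nat with (twos (gamma_exp m)); [exact IH|].
    unfold twos. simpl gamma_exp. pose proof (pow3_odd (gamma_exp m)). lia.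
Qed.

Lemma tower_factor : forall k : nat,
  Rpower 3 (-1/2) / 2 * Rpower 3 ((2 * INR k + 1) / 2) = 3 ^ k / 2.
Proof.
  intros k. unfold Rdiv at 1.
  rewrite (Rmult_comm (Rpower 3 (-1/2))), Rmult_assoc, <- Rpower_plus.
  replace (-1/2 + (2 * INR k + 1) / 2) with (INR k) by lra.
  rewrite Rpower_pow by lra. lra.
Qed.

Lemma INR_pow3 : forall K, INR (3 ^ K) = 3 ^ K.
Proof. intros K. rewrite pow_INR. f_equal. simpl. lra. Qed.

Lemma uptower_gamma_exp : forall m,
  uptower (Rpower 3 (-1/2) / 2) 3 (7/2) (S m) = 3 ^ gamma_exp m / 2.
Proof.
  induction m as [|m IH].
  - simpl uptower. replace (7/2) with ((2 * INR 3 + 1) / 2) by (simpl; lra).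
    apply tower_factor.
  - change (uptower (Rpower 3 (-1/2) / 2) 3 (7/2) (S (S m)))
      with (Rpower 3 (-1/2) / 2 * Rpower 3 (uptower (Rpower 3 (-1/2) / 2) 3 (7/2) (S m))).
    rewrite IH, <- INR_pow3, pow3_odd, plus_INR, mult_INR.
    replace (INR 2 * INR (Nat.div2 (3 ^ gamma_exp m)) + INR 1)
      with (2 * INR (Nat.div2 (3 ^ gamma_exp m)) + 1) by (simpl; lra).
    apply tower_factor.
Qed.

Lemma INR_twos : forall K, INR (twos K) = 2 * 3 ^ K - 1.
Proof.
  intros K. unfold twos. pose proof (Nat.pow_nonzero 3 K ltac:(lia)).
  rewrite minus_INR, mult_INR, INR_pow3 by lia. simpl. lra.
Qed.

Theorem theorem5p2 :
  forall eta : nat, (2 < eta)%nat ->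
    exists g : nat, is_gamma3 eta g /\
      INR g = 4 * uptower (Rpower 3 (-1/2) / 2) 3 (7/2) (eta - 2) - 1.
Proof.
  intros eta Heta.
  set (m := (eta - 3)%nat).
  replace eta with (m + 3)%nat by lia.
  replace (m + 3 - 2)%nat with (S m) by lia.
  exists (twos (gamma_exp m)). split.
  - apply is_gamma3_gamma_exp.
  - rewrite uptower_gamma_exp, INR_twos. lra.
Qed.
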